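(* Let $I\unlhd K[x_1,\dots,x_n]$ be an ideal and let $w\in\mathbb R^n$. Then $$\overline{\operatorname{in}_{(-1,w)}(\pi^{-1}I)}\big|_{t=1}=\operatorname{in}_{\nu,w}(I),$$ where $\pi^{-1}I$ is the preimage of $I$ under the composite $R[[t]][x]\to\mathcal O_K[x]\hookrightarrow K[x]$.
   Context: Let $K$ be a complete field with a non-trivial discrete valuation $\nu:K\to\mathbb R\cup\{\infty\}$ and a uniformizing parameter $p\in K$, with $\nu$ normalized so that $\nu(p)=1$. Let $\mathcal O_K$ be its ring of integers and $\mathfrak K$ its residue field. Let $R\subseteq\mathcal O_K$ be a dense noetherian subring with $p\in R$. Write $x=(x_1,\dots,x_n)$. The map $\pi:R[[t]][x]\to\mathcal O_K[x]$, $t\mapsto p$, is surjective with kernel $\langle p-t\rangle$. We also write $\pi$ for its composite with the inclusion $\mathcal O_K[x]\subseteq K[x]$. Initial forms over $K$: for $f=\sum_\alpha c_\alpha x^\alpha\in K[x]$ and $w\in\mathbb R^n$, $\operatorname{in}_{\nu,w}(f)=\sum \overline{c_\alpha p^{-\nu(c_\alpha)}}\,x^\alpha\in\mathfrak K[x]$. The sum runs over those $\alpha$ with $c_\alpha\neq0$ for which $w\cdot\alpha-\nu(c_\alpha)$ is maximal. $\operatorname{in}_{\nu,w}(I)$ is the ideal of $\mathfrak K[x]$ generated by all $\operatorname{in}_{\nu,w}(f)$ with $f\in I$. Initial forms over $R[[t]]$: for $f=\sum c_{\alpha,\beta}t^\beta x^\alpha\in R[[t]][x]$ and $w\in\mathbb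 R_{<0}\times\mathbb R^n$, $\operatorname{in}_w(f)\in R[t,x]$ is the sum of the terms with $w\cdot(\beta,\alpha)$ maximal. $\operatorname{in}_w(J)\unlhd R[t,x]$ is generated by the $\operatorname{in}_w(f)$ with $f\in J$. For $J\unlhd R[t,x]$, $\overline{J}|_{t=1}$ is the image of $J$ under the map $R[t,x]\to\mathfrak K[x]$ that reduces coefficients to $\mathfrak K$ and sets $t=1$. *)

From HB Require Import structures.
From mathcomp Require Import all_boot all_order all_algebra.
From mathcomp Require Import mpoly.
From mathcomp Require Import reals.
Set Implicit Arguments. Unset Strict Implicit. Unset Printing Implicit Defensive.
Import Order.TTheory GRing.Theory Num.Theory.
Local Open Scope ring_scope.

Section Defs.
Variable K : fieldType.
Variable nu : K -> int.   (* normalized discrete valuation; nu 0 (= +oo) is never used *)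
Variable p : K.

Definition vclose (N : int) (x : K) : Prop := x = 0 \/ N <= nu x.

Definition is_dvaluation : Prop :=
  [/\ p != 0, nu p = 1,
      forall x y, x != 0 -> y != 0 -> nu (x * y) = nu x + nu y &
      forall x y, x != 0 -> y != 0 -> x + y != 0 -> Num.min (nu x) (nu y) <= nu (x + y)].

Definition vconverges (u : nat -> K) (l : K) : Prop :=
  forall N : nat, exists M : nat, forall m, (M <= m)%N -> vclose N%:Z (u m - l).

Definition vcauchy (u : nat -> K) : Prop :=
  forall N : nat, exists M : nat, forall m m', (M <= m)%N -> (M <= m')%N ->
    vclose N%:Z (u m - u m').

Definition vcomplete : Prop := forall u, vcauchy u -> exists l, vconverges u l.

Definition OK (x : K) : Prop := vclose 0 x.

Definition is_residue_map (k : fieldType) (res : K -> k) : Prop :=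
  [/\ res 1 = 1,
      forall x y, OK x -> OK y -> res (x + y) = res x + res y,
      forall x y, OK x -> OK y -> res (x * y) = res x * res y,
      forall z : k, exists2 x, OK x & res x = z &
      forall x, OK x -> (res x = 0 <-> vclose 1 x)].

Definition is_subring (Rs : K -> Prop) : Prop :=
  [/\ Rs 0, Rs 1, forall x, Rs x -> Rs (- x),
      forall x y, Rs x -> Rs y -> Rs (x + y) &
      forall x y, Rs x -> Rs y -> Rs (x * y)].

Definition is_noetherian_sub (Rs : K -> Prop) : Prop :=
  forall J : K -> Prop,
    (forall x, J x -> Rs x) -> J 0 -> (forall x y, J x -> J y -> J (x + y)) ->
    (forall r x, Rs r -> J x -> J (r * x)) ->
    exists gs : seq K, (forall g, g \in gs -> J g) /\
      (forall x, J x <-> exists cs : seq K, [/\ size cs = size gs,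
          forall c, c \in cs -> Rs c &
          x = \sum_(i < size gs) cs`_i * gs`_i]).

Definition dense_in_OK (Rs : K -> Prop) : Prop :=
  forall x, OK x -> forall N : nat, exists2 r, Rs r & vclose N%:Z (x - r).

End Defs.

Definition is_ideal (T : comRingType) (I : T -> Prop) : Prop :=
  [/\ I 0, forall a b, I a -> I b -> I (a + b) & forall r a, I a -> I (r * a)].

(* the set of finite combinations sum_i h_i g_i with h_i in S and g_i in G:
   the ideal generated by G inside the subring S of T *)
Definition gen_ideal (T : comRingType) (S G : T -> Prop) (x : T) : Prop :=
  exists s : seq (T * T), (forall q, q \in s -> S q.1 /\ G q.2) /\
    x = \sum_(q <- s) q.1 * q.2.

Section Polys.
Variable K : fieldType.
Variable n : nat.

(* Elements of R[[t]][x] are encoded as coefficient functions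
   f : 'X_{1..n} -> nat -> K,  f a b = coefficient of t^b x^a. *)
Definition RtX_series (Rs : K -> Prop) (f : 'X_{1..n} -> nat -> K) : Prop :=
  (forall a b, Rs (f a b)) /\
  exists S : seq 'X_{1..n}, forall a b, f a b != 0 -> a \in S.

(* pi : R[[t]][x] -> O_K[x] c K[x], t |-> p  (as a relation: pi f = g) *)
Definition pi_rel (nu : K -> int) (p : K) (f : 'X_{1..n} -> nat -> K)
    (g : {mpoly K[n]}) : Prop :=
  forall a, vconverges nu (fun N => \sum_(b < N) f a b * p ^+ b) g@_a.

(* R[t,x] = elements of K[t,x] (t = variable 0, x_i = variable i+1)
   with coefficients in Rs *)
Definition RtX_poly (Rs : K -> Prop) (h : {mpoly K[n.+1]}) : Prop :=
  forall m, Rs h@_m.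

Definition mtail (m : 'X_{1..n.+1}) : 'X_{1..n} :=
  [multinom m (lift ord0 i) | i < n].

Variable rR : realType.
Variable w : 'I_n -> rR.

Definition wdot (a : 'X_{1..n}) : rR := \sum_(i < n) w i * (a i)%:R.

Definition wt_t (a : 'X_{1..n}) (b : nat) : rR := - b%:R + wdot a.

Definition maxterm (f : 'X_{1..n} -> nat -> K) (a : 'X_{1..n}) (b : nat) : Prop :=
  f a b != 0 /\ forall a' b', f a' b' != 0 -> wt_t a' b' <= wt_t a b.

Definition is_initial_form (f : 'X_{1..n} -> nat -> K) (h : {mpoly K[n.+1]}) : Prop :=
  forall m : 'X_{1..n.+1},
    (maxterm f (mtail m) (m ord0) -> h@_m = f (mtail m) (m ord0)) /\
    (~ maxterm f (mtail m) (m ord0) -> h@_m = 0).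

(* reduce coefficients to the residue field and set t = 1 *)
Definition red_t1 (k : fieldType) (res : K -> k) (h : {mpoly K[n.+1]}) : {mpoly k[n]} :=
  \sum_(m <- msupp h) res h@_m *: 'X_[mtail m].

Definition wt_nu (nu : K -> int) (f : {mpoly K[n]}) (a : 'X_{1..n}) : rR :=
  wdot a - (nu f@_a)%:~R.

Definition in_nu (nu : K -> int) (p : K) (k : fieldType) (res : K -> k)
    (f : {mpoly K[n]}) : {mpoly k[n]} :=
  \sum_(a <- msupp f | all (fun a' => wt_nu nu f a' <= wt_nu nu f a) (msupp f))
     res (f@_a * p ^ (- nu f@_a)) *: 'X_[a].

End Polys.

From HB Require Import structures.
From mathcomp Require Import all_boot all_order all_algebra.
From mathcomp Require Import mpoly.
From mathcomp Require Import reals.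
From mathcomp Require Import ring lra zify.
From Stdlib Require Import ClassicalEpsilon.
Set Implicit Arguments. Unset Strict Implicit. Unset Printing Implicit Defensive.
Import Order.TTheory GRing.Theory Num.Theory.
Local Open Scope ring_scope.

(* Reduction of the coefficients modulo the maximal ideal followed by t = 1 is a
   ring morphism on R[t,x].  If F in R[[t]][x] maps to g under t |-> p, the
   coefficient g_a agrees modulo p^(b+1) with F_(a,b) p^b, where b is the first
   exponent with F_(a,b) <> 0.  Hence a term of F of maximal (-1,w)-weight whose
   coefficient is a unit forces nu(g_a) = b, so that the weights -b + w.a and
   w.a - nu(g_a) agree and the reduced initial form of F is in_(nu,w)(g); if all
   maximal terms vanish modulo p, it is 0.  Conversely, after scaling by a power
   of p every f in I lies in O_K[x], and the p-adic expansion of its coefficients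
   with digits rounded into R (digits in the maximal ideal rounded to 0) has only
   unit or zero digits, so it has a maximal term with unit coefficient. *)

Section Valuation.
Variables (K : fieldType) (nu : K -> int) (p : K).
Hypothesis Hnu : is_dvaluation nu p.

Lemma p_neq0 : p != 0. Proof. by case: Hnu. Qed.

Lemma nup : nu p = 1. Proof. by case: Hnu. Qed.

Lemma nuM x y : x != 0 -> y != 0 -> nu (x * y) = nu x + nu y.
Proof. by case: Hnu => _ _ + _; apply. Qed.

Lemma nuD_ge_min x y : x != 0 -> y != 0 -> x + y != 0 ->
  Num.min (nu x) (nu y) <= nu (x + y).
Proof. by case: Hnu => _ _ _; apply. Qed.

Lemma nu1 : nu 1 = 0.
Proof.
have := nuM (oner_neq0 K) (oner_neq0 K); rewrite mulr1.
by set v := nu 1; lia.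
Qed.

Lemma nuV x : x != 0 -> nu x^-1 = - nu x.
Proof.
move=> x0; have := nuM x0 (invr_neq0 x0); rewrite divff // nu1.
by set v := nu x^-1; lia.
Qed.

Lemma nuN x : nu (- x) = nu x.
Proof.
have [->|x0] := eqVneq x 0; first by rewrite oppr0.
have N1_neq0 : (-1 : K) != 0 by rewrite oppr_eq0 oner_neq0.
have := nuM N1_neq0 N1_neq0; rewrite mulrNN mulr1 nu1 => nuN1.
by rewrite -mulN1r nuM //; lia.
Qed.

Lemma nu_pexpn j : nu (p ^+ j) = j%:Z.
Proof.
elim: j => [|j IHj]; first by rewrite expr0 nu1.
by rewrite exprS nuM ?expf_neq0 ?p_neq0 // IHj nup; lia.
Qed.

Lemma nu_pexpz (z : int) : nu (p ^ z) = z.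
Proof.
case: z => j; first exact: nu_pexpn.
by rewrite NegzE -invr_expz nuV ?expf_neq0 ?p_neq0 // nu_pexpn.
Qed.

Lemma vclose0 N : vclose nu N 0. Proof. by left. Qed.

Lemma vcloseW N M x : M <= N -> vclose nu N x -> vclose nu M x.
Proof. by move=> leMN [->|lenu]; [left|right; apply: le_trans lenu]. Qed.

Lemma vcloseN N x : vclose nu N x -> vclose nu N (- x).
Proof. by case=> [->|lenu]; [left; rewrite oppr0|right; rewrite nuN]. Qed.

Lemma vcloseD N x y : vclose nu N x -> vclose nu N y -> vclose nu N (x + y).
Proof.
have [-> _|x0] := eqVneq x 0; first by rewrite add0r.
have [-> ?|y0] := eqVneq y 0; first by rewrite addr0.
have [-> _ _|xy0] := eqVneq (x + y) 0; first exact: vclose0.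
case=> [/eqP|lex]; first by rewrite (negbTE x0).
case=> [/eqP|ley]; first by rewrite (negbTE y0).
by right; apply: le_trans (nuD_ge_min x0 y0 xy0); rewrite le_min lex.
Qed.

Lemma vcloseB N x y : vclose nu N x -> vclose nu N y -> vclose nu N (x - y).
Proof. by move=> cx cy; apply/vcloseD/vcloseN. Qed.

Lemma vcloseM N M x y : vclose nu N x -> vclose nu M y -> vclose nu (N + M) (x * y).
Proof.
have [-> _ _|x0] := eqVneq x 0; first by rewrite mul0r; left.
have [-> _ _|y0] := eqVneq y 0; first by rewrite mulr0; left.
case=> [/eqP|lex]; first by rewrite (negbTE x0).
case=> [/eqP|ley]; first by rewrite (negbTE y0).
by right; rewrite nuM // lerD.
Qed.

Lemma vclose_sum N (I : Type) (s : seq I) (P : pred I) (F : I -> K) :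
  (forall i, P i -> vclose nu N (F i)) -> vclose nu N (\sum_(i <- s | P i) F i).
Proof. by move=> cF; apply: (big_ind (vclose nu N)) => //; [exact: vclose0|exact: vcloseD]. Qed.

Lemma vclose_pexpnM j x : OK nu x -> vclose nu j%:Z (p ^+ j * x).
Proof. by move=> Ox; rewrite -[j%:Z]addr0; apply: vcloseM Ox; right; rewrite nu_pexpn. Qed.

Lemma vclose_eq0 x : (forall N : nat, vclose nu N%:Z x) -> x = 0.
Proof.
move=> cx; have [//|x0] := eqVneq x 0.
by case: (cx (absz (nu x)).+1) => [//|]; lia.
Qed.

Lemma nuD_dominant x y : x != 0 -> vclose nu (nu x + 1) y ->
  x + y != 0 /\ nu (x + y) = nu x.
Proof.
move=> x0 [->|ley]; first by rewrite addr0.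
have [->|y0] := eqVneq y 0; first by rewrite addr0.
have xy0 : x + y != 0.
  by apply: contraTneq ley => /eqP; rewrite addr_eq0 => /eqP->; rewrite nuN; lia.
have Ny0 : - y != 0 by rewrite oppr_eq0.
have xyNy0 : x + y - y != 0 by rewrite addrK.
split=> //; have := nuD_ge_min x0 y0 xy0; have := nuD_ge_min xy0 Ny0 xyNy0.
by rewrite addrK nuN !ge_min => /orP[h1|h1] /orP[h2|h2]; lia.
Qed.

Section Residue.
Variables (k : fieldType) (res : K -> k).
Hypothesis Hres : is_residue_map nu res.

Lemma resD x y : OK nu x -> OK nu y -> res (x + y) = res x + res y.
Proof. by case: Hres => _ + _ _ _; apply. Qed.

Lemma resM x y : OK nu x -> OK nu y -> res (x * y) = res x * res y.
Proof. by case: Hres => _ _ + _ _; apply. Qed.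

Lemma res_eq0 x : OK nu x -> (res x = 0 <-> vclose nu 1 x).
Proof. by case: Hres => _ _ _ _; apply. Qed.

Lemma res0 : res 0 = 0.
Proof. by apply: (proj2 (res_eq0 (vclose0 0))); exact: vclose0. Qed.

Lemma OKD x y : OK nu x -> OK nu y -> OK nu (x + y).
Proof. exact: vcloseD. Qed.

Lemma OKM x y : OK nu x -> OK nu y -> OK nu (x * y).
Proof. by move=> Ox Oy; have := vcloseM Ox Oy; rewrite addr0. Qed.

Lemma res_eq_close x y : OK nu x -> OK nu y -> vclose nu 1 (x - y) -> res x = res y.
Proof.
move=> Ox Oy cxy; have Oxy : OK nu (x - y) by apply: vcloseW cxy.
by rewrite -(subrK y x) resD // (proj2 (res_eq0 Oxy) cxy) add0r.
Qed.

Lemma res_neq0_nu x : OK nu x -> res x != 0 -> x != 0 /\ nu x = 0.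
Proof.
move=> Ox rx0; have x0 : x != 0 by apply: contraNneq rx0 => ->; rewrite res0.
split=> //; case: Ox => [/eqP|ge0]; first by rewrite (negbTE x0).
suff : ~ 1 <= nu x by lia.
by move=> ge1; move/eqP: rx0; apply; apply/(res_eq0 (or_intror ge0)); right.
Qed.

Section DenseSubring.
Variable Rs : K -> Prop.
Hypothesis HRsub : is_subring Rs.
Hypothesis HROK : forall x, Rs x -> OK nu x.
Hypothesis HRdense : dense_in_OK nu Rs.

Lemma Rs0 : Rs 0. Proof. by case: HRsub. Qed.
Lemma RsD x y : Rs x -> Rs y -> Rs (x + y). Proof. by case: HRsub => _ _ _ + _; apply. Qed.

(* Rounding elements of the maximal ideal to 0 makes every nonzero digit below a unit. *)
Lemma round_spec x : exists r, OK nu x ->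
  [/\ Rs r, vclose nu 1 (x - r) & (vclose nu 1 x -> r = 0)].
Proof.
have [cx|ncx] := classic (vclose nu 1 x); first by exists 0; rewrite subr0; split; [exact: Rs0| |].
have [Ox|nOx] := classic (OK nu x); last by exists 0.
by have [r Rr cxr] := HRdense Ox 1; exists r.
Qed.

Definition round x := proj1_sig (constructive_indefinite_description _ (round_spec x)).

Lemma roundP x : OK nu x ->
  [/\ Rs (round x), vclose nu 1 (x - round x) & (vclose nu 1 x -> round x = 0)].
Proof. by rewrite /round; case: constructive_indefinite_description. Qed.

Lemma res_round x : OK nu x -> res (round x) = res x.
Proof.
move=> Ox; have [Rr cxr _] := roundP Ox.
by apply/esym/res_eq_close => //; exact: HROK.
Qed.

Lemma res_round_neq0 x : OK nu x -> round x != 0 -> res (round x) != 0.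
Proof.
move=> Ox; have [_ _ r0] := roundP Ox; rewrite res_round //.
by apply: contra_neq => /(res_eq0 Ox); exact: r0.
Qed.

Lemma res_lift_spec z : exists r, Rs r /\ res r = z.
Proof.
have [_ _ _ res_surj _] := Hres; have [x Ox <-] := res_surj z.
by exists (round x); rewrite res_round //; have [] := roundP Ox.
Qed.

Definition res_lift z := proj1_sig (constructive_indefinite_description _ (res_lift_spec z)).

Lemma res_liftP z : Rs (res_lift z) /\ res (res_lift z) = z.
Proof. by rewrite /res_lift; case: constructive_indefinite_description. Qed.

Fixpoint digit_rem (c : K) (j : nat) : K :=
  if j is j'.+1 then (digit_rem c j' - round (digit_rem c j')) / p else c.

Definition digit c j := round (digit_rem c j).

Lemma OK_digit_rem c j : OK nu c -> OK nu (digit_rem c j).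
Proof.
move=> Oc; elim: j => [//|j IHj] /=; have [_ crem _] := roundP IHj.
have cpV : vclose nu (-1) p^-1 by right; rewrite nuV ?p_neq0 ?nup.
by have := vcloseM crem cpV; rewrite subrr.
Qed.

Lemma digit_Rs c j : OK nu c -> Rs (digit c j).
Proof. by move=> /(OK_digit_rem j) /roundP[]. Qed.

Lemma res_digit_neq0 c j : OK nu c -> digit c j != 0 -> res (digit c j) != 0.
Proof. by move=> /(OK_digit_rem j); exact: res_round_neq0. Qed.

Lemma digit0 j : digit 0 j = 0.
Proof.
have round0 : round 0 = 0 by have [_ _ ->] := roundP (vclose0 0); last exact: vclose0.
suff rem0 : digit_rem 0 j = 0 by rewrite /digit rem0.
by elim: j => //= j ->; rewrite round0 subrr mul0r.
Qed.

Lemma digit_expansion c j :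
  c = \sum_(i < j) digit c i * p ^+ i + p ^+ j * digit_rem c j.
Proof.
elim: j => [|j IHj]; first by rewrite big_ord0 add0r expr0 mul1r.
rewrite big_ord_recr /= exprSr {1}IHj /digit; set r := digit_rem c j.
by field; exact: p_neq0.
Qed.

Lemma digits_converge c : OK nu c ->
  vconverges nu (fun N => \sum_(b < N) digit c b * p ^+ b) c.
Proof.
move=> Oc N; exists N => m leNm; rewrite {2}(digit_expansion c m) opprD addrA subrr add0r.
by apply/vcloseN/(vcloseW (N := m%:Z)); [lia|apply/vclose_pexpnM/OK_digit_rem].
Qed.

End DenseSubring.
End Residue.
End Valuation.

Lemma big_seq_single (T : eqType) (R : nmodType) (s : seq T) (P : pred T)
    (G : T -> R) t :
  uniq s -> (forall u, u \in s -> P u -> u != t -> G u = 0) ->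
  \sum_(u <- s | P u) G u = if (t \in s) && P t then G t else 0.
Proof.
move=> s_uniq G0; case: ifP => [/andP[ts Pt]|tsP].
  rewrite big_mkcond (bigD1_seq t) //= Pt big1_seq ?addr0 // => u /andP[ut us].
  by case: ifP => // Pu; apply: G0.
rewrite big1_seq // => u /andP[Pu us]; apply: G0 => //.
by apply: contraFneq tsP => <-; rewrite us.
Qed.

Lemma mcoeff_sumX (R : nzRingType) m (s : seq 'X_{1..m}) (P : pred 'X_{1..m})
    (c : 'X_{1..m} -> R) a :
  uniq s ->
  (\sum_(b <- s | P b) c b *: 'X_[b])@_a = if (a \in s) && P a then c a else 0.
Proof.
move=> s_uniq; rewrite raddf_sum /= (big_seq_single (t := a) s_uniq) => [|b _ _ ba].
  by rewrite mcoeffZ mcoeffX eqxx mulr1.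
by rewrite mcoeffZ mcoeffX (negbTE ba) mulr0.
Qed.

Lemma seq_argmax (T : eqType) d (R : orderType d) (f : T -> R) (s : seq T) :
  s != [::] -> exists2 x, x \in s & {in s, forall y, (f y <= f x)%O}.
Proof.
elim: s => // x s IHs _; have [->|s0] := eqVneq s [::].
  by exists x; rewrite ?mem_head // => y; rewrite inE => /eqP->.
have [y ys maxy] := IHs s0; have [lexy|ltyx] := leP (f x) (f y).
  by exists y => [|z]; rewrite inE ?ys ?orbT // => /orP[/eqP->|/maxy].
exists x => [|z]; rewrite ?mem_head // inE => /orP[/eqP->//|/maxy leyz].
exact: le_trans leyz (ltW ltyx).
Qed.

Section Monomials.
Variable n : nat.

Definition mcons (b : nat) (a : 'X_{1..n}) : 'X_{1..n.+1} :=
  [multinom (if unlift ord0 i is Some j then a j else b) | i < n.+1].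

Lemma mtail_mcons b a : mtail (mcons b a) = a.
Proof. by apply/mnmP => i; rewrite /mtail /mcons !mnmE liftK. Qed.

Lemma mcons_ord0 b a : mcons b a ord0 = b.
Proof. by rewrite /mcons mnmE unlift_none. Qed.

Lemma mcons_mtail (m : 'X_{1..n.+1}) : mcons (m ord0) (mtail m) = m.
Proof.
by apply/mnmP => i; rewrite /mcons mnmE; case: unliftP => [j ->|->] //; rewrite /mtail mnmE.
Qed.

Lemma mtailD (m1 m2 : 'X_{1..n.+1}) : mtail (m1 + m2) = (mtail m1 + mtail m2)%MM.
Proof. by apply/mnmP => i; rewrite /mtail !mnmE. Qed.

End Monomials.

Definition OK_mpoly (K : fieldType) (nu : K -> int) m (h : {mpoly K[m]}) : Prop :=
  forall a, OK nu h@_a.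

Section Reduction.
Variables (K : fieldType) (nu : K -> int) (p : K) (k : fieldType) (res : K -> k).
Hypothesis Hnu : is_dvaluation nu p.
Hypothesis Hres : is_residue_map nu res.
Variable n : nat.
Implicit Types h : {mpoly K[n.+1]}.

Lemma OK_mpolyM h1 h2 : OK_mpoly nu h1 -> OK_mpoly nu h2 -> OK_mpoly nu (h1 * h2).
Proof.
move=> O1 O2 a; rewrite mcoeffM.
by apply: (big_ind (OK nu)); [exact: vclose0|exact: (OKD Hnu)|move=> i _; apply: (OKM Hnu)].
Qed.

Lemma OK_mpoly_sum (I : Type) (s : seq I) (P : pred I) (F : I -> {mpoly K[n.+1]}) :
  (forall i, P i -> OK_mpoly nu (F i)) -> OK_mpoly nu (\sum_(i <- s | P i) F i).
Proof.
move=> OF a; rewrite raddf_sum.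
by apply: (big_ind (OK nu)); [exact: vclose0|exact: (OKD Hnu)|move=> i /OF; exact].
Qed.

Lemma OK_mpolyZX c (m : 'X_{1..n.+1}) : OK nu c -> OK_mpoly nu (c *: 'X_[m]).
Proof.
by move=> Oc a; rewrite mcoeffZ mcoeffX; case: eqP; rewrite ?mulr1 ?mulr0 //; left.
Qed.

Lemma mcoeff_red_t1 h a :
  (red_t1 res h)@_a = \sum_(m <- msupp h | mtail m == a) res h@_m.
Proof.
rewrite /red_t1 raddf_sum [RHS]big_mkcond /=; apply: eq_bigr => m _.
by rewrite mcoeffZ mcoeffX; case: eqP; rewrite ?mulr1 ?mulr0.
Qed.

Lemma red_t1E h (s : seq 'X_{1..n.+1}) : uniq s -> {subset msupp h <= s} ->
  red_t1 res h = \sum_(m <- s) res h@_m *: 'X_[mtail m].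
Proof.
move=> s_uniq hs; rewrite [RHS](bigID (mem (msupp h))) /=.
rewrite [X in _ + X]big1 ?addr0 => [|m /memN_msupp_eq0 ->]; last by rewrite (res0 Hres) scale0r.
rewrite -big_filter; apply: perm_big; apply: uniq_perm; rewrite ?filter_uniq ?msupp_uniq //.
by move=> m; rewrite mem_filter; case: (boolP (m \in msupp h)) => // /hs ->.
Qed.

Lemma red0 : red_t1 res (0 : {mpoly K[n.+1]}) = 0.
Proof. by rewrite /red_t1 msupp0 big_nil. Qed.

Lemma redD h1 h2 : OK_mpoly nu h1 -> OK_mpoly nu h2 ->
  red_t1 res (h1 + h2) = red_t1 res h1 + red_t1 res h2.
Proof.
move=> O1 O2; set s := undup (msupp h1 ++ msupp h2).
have s_uniq : uniq s := undup_uniq _.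
rewrite !(red_t1E s_uniq) => [|m|m|m /msuppD_le]; rewrite ?mem_undup ?mem_cat;
  try by move=> ->; rewrite ?orbT.
by rewrite -big_split; apply: eq_bigr => m _; rewrite mcoeffD (resD Hres) // scalerDl.
Qed.

Lemma red_sum (I : eqType) (s : seq I) (F : I -> {mpoly K[n.+1]}) :
  (forall i, i \in s -> OK_mpoly nu (F i)) ->
  red_t1 res (\sum_(i <- s) F i) = \sum_(i <- s) red_t1 res (F i).
Proof.
elim: s => [|i s IHs] OF; first by rewrite !big_nil red0.
have OFs j : j \in s -> OK_mpoly nu (F j) by move=> js; apply: OF; rewrite inE js orbT.
rewrite !big_cons redD ?(IHs OFs) //; first exact: OF (mem_head _ _).
by rewrite big_seq; apply: OK_mpoly_sum.
Qed.

Lemma redZX c (m : 'X_{1..n.+1}) : red_t1 res (c *: 'X_[m]) = res c *: 'X_[mtail m].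
Proof.
have [->|c0] := eqVneq c 0; first by rewrite scale0r red0 (res0 Hres) scale0r.
by rewrite /red_t1 msuppMCX // big_seq1 mcoeffZ mcoeffX eqxx mulr1.
Qed.

Lemma redM h1 h2 : OK_mpoly nu h1 -> OK_mpoly nu h2 ->
  red_t1 res (h1 * h2) = red_t1 res h1 * red_t1 res h2.
Proof.
move=> O1 O2; rewrite mpolyME red_sum => [|m _]; last exact/OK_mpolyZX/(OKM Hnu).
rewrite big_allpairs /red_t1 big_distrl; apply: eq_bigr => m1 _ /=.
rewrite big_distrr; apply: eq_bigr => m2 _ /=.
by rewrite -/(red_t1 res _) redZX (resM Hres) // mtailD mpolyXD -scalerAl -scalerAr scalerA.
Qed.

Lemma red_sum_mul (s : seq ({mpoly K[n.+1]} * {mpoly K[n.+1]})) :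
  (forall q, q \in s -> OK_mpoly nu q.1 /\ OK_mpoly nu q.2) ->
  red_t1 res (\sum_(q <- s) q.1 * q.2) = \sum_(q <- s) red_t1 res q.1 * red_t1 res q.2.
Proof.
move=> Os; rewrite red_sum => [|q /Os[O1 O2]]; last exact: OK_mpolyM.
by apply: eq_big_seq => q /Os[O1 O2]; rewrite redM.
Qed.

End Reduction.

Definition vanishes_below (K : fieldType) n (F : 'X_{1..n} -> nat -> K) a b : Prop :=
  forall b', (b' < b)%N -> F a b' = 0.

Lemma first_nonzero_term (K : fieldType) n (F : 'X_{1..n} -> nat -> K) a b :
  F a b != 0 -> exists b0, [/\ (b0 <= b)%N, F a b0 != 0 & vanishes_below F a b0].
Proof.
move=> Fb0; have [b0 Fb00 min_b0] := ex_minnP (ex_intro (fun b => F a b != 0) b Fb0).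
exists b0; split=> // [|b' ltb']; first exact: min_b0.
by apply/eqP; apply: contraTT ltb' => /min_b0; rewrite -leqNgt.
Qed.

Section PiSeries.
Variables (K : fieldType) (nu : K -> int) (p : K) (k : fieldType) (res : K -> k).
Hypothesis Hnu : is_dvaluation nu p.
Hypothesis Hres : is_residue_map nu res.
Variable n : nat.
Variables (F : 'X_{1..n} -> nat -> K) (g : {mpoly K[n]}).
Hypothesis OK_F : forall a b, OK nu (F a b).
Hypothesis Hpi : pi_rel nu p F g.

Lemma pi_coef_close a b : vanishes_below F a b ->
  vclose nu b.+1%:Z (g@_a - F a b * p ^+ b).
Proof.
(* A partial sum is F a b * p ^+ b plus a tail in p ^+ b.+1 O_K. *)
move=> low; have [M cM] := Hpi a b.+1; set m := maxn M b.+1.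
have := cM m (leq_maxl _ _); rewrite -(big_mkord xpredT (fun i => F a i * p ^+ i)).
rewrite (big_cat_nat (n := b.+1)) ?leq_maxr //= big_nat_recr //= big1_seq ?add0r.
  set T := \sum_(b.+1 <= i < m) _ => cS.
  have cT : vclose nu b.+1%:Z T.
    rewrite /T big_seq; apply: (vclose_sum Hnu) => i; rewrite mem_index_iota => /andP[lebi _].
    by rewrite mulrC; apply: (vcloseW (N := i%:Z)); [lia|exact: (vclose_pexpnM Hnu)].
  rewrite (_ : g@_a - _ = T - (F a b * p ^+ b + T - g@_a)); first exact: (vcloseB Hnu).
  by ring.
by move=> i; rewrite mem_index_iota => /andP[_ /low ->]; rewrite mul0r.
Qed.

Lemma pi_coef_eq0 a : (forall b, F a b = 0) -> g@_a = 0.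
Proof.
move=> F0; apply: (vclose_eq0 (nu := nu)) => N.
have [M cM] := Hpi a N; have := cM M (leqnn _).
by rewrite big1 ?sub0r => [/(vcloseN Hnu)|i _]; rewrite ?opprK ?F0 ?mul0r.
Qed.

Lemma pi_coef_neq0_term a : g@_a != 0 -> exists b, F a b != 0.
Proof.
move=> ga0; apply: NNPP => noF; move/eqP: ga0; apply; apply: pi_coef_eq0 => b.
by apply/eqP; apply: contraT => Fb0; case: noF; exists b.
Qed.

Lemma nu_pi_coef_ge a b : vanishes_below F a b -> g@_a != 0 -> b%:Z <= nu g@_a.
Proof.
move=> low ga0; suff : vclose nu b%:Z g@_a by case=> [/eqP|//]; rewrite (negbTE ga0).
rewrite -(subrK (F a b * p ^+ b) g@_a); apply: (vcloseD Hnu).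
  by apply: (vcloseW (N := b.+1%:Z)); [lia|exact: pi_coef_close].
by rewrite mulrC; exact: (vclose_pexpnM Hnu).
Qed.

Lemma nu_pi_coef_gt a b : vanishes_below F a b -> res (F a b) = 0 ->
  g@_a != 0 -> b.+1%:Z <= nu g@_a.
Proof.
move=> low rF0 ga0; suff : vclose nu b.+1%:Z g@_a by case=> [/eqP|//]; rewrite (negbTE ga0).
rewrite -(subrK (F a b * p ^+ b) g@_a); apply: (vcloseD Hnu); first exact: pi_coef_close.
have cpb : vclose nu b%:Z (p ^+ b) by right; rewrite (nu_pexpn Hnu).
by rewrite -add1n PoszD; apply: (vcloseM Hnu) cpb; apply/(res_eq0 Hres).
Qed.

Lemma pi_coef_unit a b : vanishes_below F a b -> res (F a b) != 0 ->
  g@_a != 0 /\ nu g@_a = b%:Z.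
Proof.
move=> low rF0; have [F0 nuF] := res_neq0_nu Hres (OK_F a b) rF0.
have x0 : F a b * p ^+ b != 0 by rewrite mulf_neq0 ?expf_neq0 ?(p_neq0 Hnu).
have nux : nu (F a b * p ^+ b) = b%:Z.
  by rewrite (nuM Hnu) ?expf_neq0 ?(p_neq0 Hnu) // nuF (nu_pexpn Hnu) add0r.
have cy : vclose nu (nu (F a b * p ^+ b) + 1) (g@_a - F a b * p ^+ b).
  by rewrite nux (_ : b%:Z + 1 = b.+1%:Z); [exact: pi_coef_close|lia].
by have := nuD_dominant Hnu x0 cy; rewrite subrKC nux.
Qed.

Lemma res_pi_lead a b : vanishes_below F a b -> nu g@_a = b%:Z ->
  res (g@_a * p ^ (- nu g@_a)) = res (F a b).
Proof.
move=> low nug; have p0 := p_neq0 Hnu.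
have cpb : vclose nu (- b%:Z) (p ^ (- nu g@_a)) by right; rewrite (nu_pexpz Hnu) nug.
have cdiff : vclose nu 1 (g@_a * p ^ (- nu g@_a) - F a b).
  have := vcloseM Hnu (pi_coef_close low) cpb.
  rewrite nug mulrBl -mulrA exprnP -expfzDr // addrN expr0z mulr1.
  by rewrite (_ : b.+1%:Z - b%:Z = 1) //; lia.
apply: (res_eq_close Hres _ (OK_F a b) cdiff).
by rewrite -(subrK (F a b) (g@_a * _)); apply: (OKD Hnu) (OK_F a b); apply: vcloseW cdiff.
Qed.

End PiSeries.

Section Weights.
Variables (K : fieldType) (nu : K -> int) (n : nat) (rR : realType) (w : 'I_n -> rR).
Variables (g : {mpoly K[n]}) (a : 'X_{1..n}) (b : nat).

Lemma wt_nu_le : b%:Z <= nu g@_a -> wt_nu w nu g a <= wt_t w a b.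
Proof. by rewrite /wt_nu /wt_t -(ler_int rR) -pmulrn => ?; lra. Qed.

Lemma wt_nu_lt : b.+1%:Z <= nu g@_a -> wt_nu w nu g a < wt_t w a b.
Proof. by rewrite /wt_nu /wt_t -(ler_int rR) -pmulrn -natr1 => ?; lra. Qed.

Lemma wt_nu_eq : nu g@_a = b%:Z -> wt_nu w nu g a = wt_t w a b.
Proof. by rewrite /wt_nu /wt_t => ->; rewrite -pmulrn addrC. Qed.

End Weights.

Section InitialForm.
Variables (K : fieldType) (n : nat) (rR : realType) (w : 'I_n -> rR).
Variable F : 'X_{1..n} -> nat -> K.

Lemma maxterm_below a b : maxterm w F a b -> vanishes_below F a b.
Proof.
case=> _ maxb b' ltb'; apply/eqP; apply: contraT => Fb'0.
by have := maxb _ _ Fb'0; rewrite /wt_t lerD2r lerN2 ler_nat leqNgt ltb'.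
Qed.

Lemma maxterm_uniq a b b' : maxterm w F a b -> maxterm w F a b' -> b = b'.
Proof.
move=> mb mb'; have [Fb0 _] := mb; have [Fb'0 _] := mb'.
have [ltbb'|ltb'b|//] := ltngtP b b'.
  by move: Fb0; rewrite (maxterm_below mb' ltbb') eqxx.
by move: Fb'0; rewrite (maxterm_below mb ltb'b) eqxx.
Qed.

Lemma initial_form_exists (S : seq 'X_{1..n}) :
  (forall a b, F a b != 0 -> a \in S) -> exists h, is_initial_form w F h.
Proof.
move=> FS.
have top_spec a : exists ob : option nat,
    if ob is Some b then maxterm w F a b else forall b, ~ maxterm w F a b.
  have [[b mb]|nomax] := classic (exists b, maxterm w F a b); first by exists (Some b).
  by exists None => b mb; apply: nomax; exists b.
have [top topP] : exists top : 'X_{1..n} -> option nat, forall a,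
    if top a is Some b then maxterm w F a b else forall b, ~ maxterm w F a b.
  exists (fun a => proj1_sig (constructive_indefinite_description _ (top_spec a))) => a.
  exact: proj2_sig (constructive_indefinite_description _ (top_spec a)).
exists (\sum_(a <- undup S) if top a is Some b then F a b *: 'X_[mcons b a] else 0) => m.
rewrite raddf_sum /= (big_seq_single (P := xpredT) (t := mtail m)) ?undup_uniq //=; last first.
  move=> a _ _ am; case: (top a) => [b|]; last by rewrite mcoeff0.
  rewrite mcoeffZ mcoeffX; case: eqP => [bam|_]; last by rewrite mulr0.
  by move/eqP: am; rewrite -bam mtail_mcons.
rewrite andbT mem_undup; have := topP (mtail m); case: (top (mtail m)) => [b mb|nomax].
  rewrite mcoeffZ mcoeffX; split=> [mm|nmm].
    have [Fb0 _] := mb.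
    by rewrite (FS _ _ Fb0) (maxterm_uniq mb mm) mcons_mtail eqxx mulr1.
  case: ifP => // _; case: eqP => [bm|_]; last by rewrite mulr0.
  by case: nmm; rewrite -bm mcons_ord0 mtail_mcons.
by rewrite mcoeff0 if_same; split=> // /nomax.
Qed.

Variable h : {mpoly K[n.+1]}.
Hypothesis Hin : is_initial_form w F h.

Lemma initial_form_RtX (Rs : K -> Prop) : is_subring Rs -> (forall a b, Rs (F a b)) ->
  RtX_poly Rs h.
Proof.
move=> HRsub RF m; have [hmax hnomax] := Hin m.
by have [/hmax->|/hnomax->] := classic (maxterm w F (mtail m) (m ord0)); [|exact: Rs0].
Qed.

Variables (nu : K -> int) (k : fieldType) (res : K -> k).
Hypothesis Hres : is_residue_map nu res.

Lemma mcoeff_red_initial a b : maxterm w F a b -> (red_t1 res h)@_a = res (F a b).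
Proof.
move=> mb; rewrite mcoeff_red_t1 (big_seq_single (t := mcons b a)) ?msupp_uniq //.
  have [hmax _] := Hin (mcons b a); rewrite mtail_mcons mcons_ord0 in hmax.
  by have [Fb0 _] := mb; rewrite mtail_mcons eqxx andbT mcoeff_msupp hmax // Fb0.
move=> m _ /eqP tma; apply: contra_neq_eq => rhm0.
have mm : maxterm w F a (m ord0).
  apply: NNPP => nomax; move: rhm0; have [_ ->] := Hin m; last by rewrite tma.
  by rewrite (res0 Hres) eqxx.
by rewrite (maxterm_uniq mb mm) -tma mcons_mtail.
Qed.

Lemma mcoeff_red_initial_nomax a : (forall b, ~ maxterm w F a b) -> (red_t1 res h)@_a = 0.
Proof.
move=> nomax; rewrite mcoeff_red_t1 big1 // => m /eqP tma.
by have [_ ->] := Hin m; rewrite ?(res0 Hres) ?tma.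
Qed.

Lemma red_initial_form_eq0 : (forall a b, maxterm w F a b -> res (F a b) = 0) ->
  red_t1 res h = 0.
Proof.
move=> res_max0; apply/mpolyP => a; rewrite mcoeff0.
have [[b mb]|nomax] := classic (exists b, maxterm w F a b).
  by rewrite (mcoeff_red_initial mb) res_max0.
by apply: mcoeff_red_initial_nomax => b mb; apply: nomax; exists b.
Qed.

End InitialForm.

Section InNu.
Variables (K : fieldType) (nu : K -> int) (p : K) (k : fieldType) (res : K -> k).
Variables (n : nat) (rR : realType) (w : 'I_n -> rR).

Lemma mcoeff_in_nu g a : (in_nu w nu p res g)@_a =
  if (a \in msupp g) && all (fun a' => wt_nu w nu g a' <= wt_nu w nu g a) (msupp g)
  then res (g@_a * p ^ (- nu g@_a)) else 0.
Proof. by rewrite /in_nu mcoeff_sumX ?msupp_uniq. Qed.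

Lemma in_nu0 : in_nu w nu p res 0 = 0.
Proof. by rewrite /in_nu msupp0 big_nil. Qed.

End InNu.

Section InitialFormOfPi.
Variables (K : fieldType) (nu : K -> int) (p : K) (k : fieldType) (res : K -> k).
Hypothesis Hnu : is_dvaluation nu p.
Hypothesis Hres : is_residue_map nu res.
Variables (n : nat) (rR : realType) (w : 'I_n -> rR).
Variables (F : 'X_{1..n} -> nat -> K) (g : {mpoly K[n]}) (h : {mpoly K[n.+1]}).
Hypothesis OK_F : forall a b, OK nu (F a b).
Hypothesis Hpi : pi_rel nu p F g.
Hypothesis Hin : is_initial_form w F h.

Lemma wt_nu_le_maxterm a0 b0 : maxterm w F a0 b0 ->
  {in msupp g, forall a, wt_nu w nu g a <= wt_t w a0 b0}.
Proof.
move=> [_ max0] a; rewrite mcoeff_msupp => ga0.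
have [b' /first_nonzero_term[b [_ Fb0 low]]] := pi_coef_neq0_term Hnu Hpi ga0.
exact: le_trans (wt_nu_le w (nu_pi_coef_ge Hnu OK_F Hpi low ga0)) (max0 _ _ Fb0).
Qed.

Lemma red_initial_form a0 b0 : maxterm w F a0 b0 -> res (F a0 b0) != 0 ->
  red_t1 res h = in_nu w nu p res g.
Proof.
move=> m0 r0; set W := wt_t w a0 b0; have leW := wt_nu_le_maxterm m0.
have [ga00 nu0] := pi_coef_unit Hnu Hres OK_F Hpi (maxterm_below m0) r0.
have is_top a : (a \in msupp g) && all (fun a' => wt_nu w nu g a' <= wt_nu w nu g a) (msupp g)
    = (a \in msupp g) && (W <= wt_nu w nu g a).
  case: (a \in msupp g) => //=; apply/allP/idP => [/(_ a0)|leWa a' /leW /le_trans]; last exact.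
  by rewrite mcoeff_msupp ga00 (wt_nu_eq w nu0); apply.
apply/mpolyP => a; rewrite mcoeff_in_nu is_top.
have [[b mb]|nomax] := classic (exists b, maxterm w F a b); last first.
  rewrite (mcoeff_red_initial_nomax Hin Hres) => [|b mb]; last by apply: nomax; exists b.
  case: ifP => // /andP[]; rewrite mcoeff_msupp => ga0 leWa; case: nomax.
  have [b' /first_nonzero_term[b [_ Fb0 low]]] := pi_coef_neq0_term Hnu Hpi ga0.
  exists b; split=> // a' b'' /m0.2.
  move=> /le_trans; apply; apply: le_trans leWa _.
  by apply: (wt_nu_le w); exact: (nu_pi_coef_ge Hnu OK_F Hpi low ga0).
have wtb : wt_t w a b = W by apply/eqP; rewrite eq_le (mb.2 _ _ m0.1) (m0.2 _ _ mb.1).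
rewrite (mcoeff_red_initial Hin Hres mb); have low := maxterm_below mb.
have [rb0|rb] := eqVneq (res (F a b)) 0.
  rewrite rb0; case: ifP => // /andP[]; rewrite mcoeff_msupp => ga0.
  by have := wt_nu_lt w (nu_pi_coef_gt Hnu Hres OK_F Hpi low rb0 ga0); rewrite wtb => /lt_geF->.
have [ga0 nub] := pi_coef_unit Hnu Hres OK_F Hpi low rb.
by rewrite mcoeff_msupp ga0 (wt_nu_eq w nub) wtb lexx (res_pi_lead Hnu Hres OK_F Hpi low nub).
Qed.

Lemma red_initial_form_cases :
  red_t1 res h = in_nu w nu p res g \/ red_t1 res h = 0.
Proof.
have [[a0 [b0 [m0 r0]]]|nomax] := classic (exists a b, maxterm w F a b /\ res (F a b) != 0).
  by left; exact: red_initial_form m0 r0.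
right; apply: (red_initial_form_eq0 Hin Hres) => a b mab.
by apply/eqP; apply: contraT => rab; case: nomax; exists a, b.
Qed.

Lemma unit_series_maxterm : (forall a b, F a b != 0 -> res (F a b) != 0) -> g != 0 ->
  exists a0 b0, maxterm w F a0 b0 /\ res (F a0 b0) != 0.
Proof.
move=> unitF g0; have supp_g : msupp g != [::] by rewrite msupp_eq0.
have [a0 a0g maxa0] := seq_argmax (wt_nu w nu g) supp_g.
have top_wt a b : F a b != 0 -> g@_a != 0 /\ wt_t w a b <= wt_nu w nu g a.
  move=> /first_nonzero_term[b1 [leb1b Fb10 low]].
  have [ga0 nub1] := pi_coef_unit Hnu Hres OK_F Hpi low (unitF _ _ Fb10).
  split=> //; rewrite (wt_nu_eq w nub1) /wt_t lerD2r lerN2 ler_nat //.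
have ga00 : g@_a0 != 0 by rewrite -mcoeff_msupp.
have [b0' /first_nonzero_term[b0 [_ Fb00 low0]]] := pi_coef_neq0_term Hnu Hpi ga00.
have [_ nub0] := pi_coef_unit Hnu Hres OK_F Hpi low0 (unitF _ _ Fb00).
exists a0, b0; split; last exact: unitF.
split=> // a b /top_wt[ga0 leab]; apply: le_trans leab _.
by rewrite -(wt_nu_eq w nub0); apply: maxa0; rewrite mcoeff_msupp.
Qed.

End InitialFormOfPi.

Section ScaledInitialForm.
Variables (K : fieldType) (nu : K -> int) (p : K) (k : fieldType) (res : K -> k).
Hypothesis Hnu : is_dvaluation nu p.
Variables (n : nat) (rR : realType) (w : 'I_n -> rR).

Lemma in_nu_scale_pexpn (f : {mpoly K[n]}) j :
  in_nu w nu p res ((p ^+ j)%:MP * f) = in_nu w nu p res f.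
Proof.
have pj0 : p ^+ j != 0 by rewrite expf_neq0 ?(p_neq0 Hnu).
set g := _ * f; have gE a : g@_a = p ^+ j * f@_a by rewrite mcoeffCM.
have supp_g a : (a \in msupp g) = (a \in msupp f).
  by rewrite !mcoeff_msupp gE mulf_eq0 (negbTE pj0).
have nug a : a \in msupp f -> nu g@_a = j%:Z + nu f@_a.
  by rewrite mcoeff_msupp gE => fa0; rewrite (nuM Hnu) // (nu_pexpn Hnu).
have wt_g a : a \in msupp f -> wt_nu w nu g a = wt_nu w nu f a - j%:R.
  by move=> fa; rewrite /wt_nu nug // intrD -pmulrn; lra.
have perm_supp : perm_eq (msupp g) (msupp f) by apply: uniq_perm; rewrite ?msupp_uniq.
apply/mpolyP => a; rewrite !mcoeff_in_nu supp_g (perm_all _ perm_supp).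
case fa: (a \in msupp f) => //=.
rewrite (eq_in_all (a2 := fun a' => wt_nu w nu f a' <= wt_nu w nu f a)) => [|a' fa'].
  case: ifP => // _; rewrite nug // gE [p ^+ j * _]mulrC -mulrA; congr (res (_ * _)).
  by rewrite exprnP -expfzDr ?(p_neq0 Hnu) // opprD addNKr.
by rewrite !wt_g // lerD2r.
Qed.

End ScaledInitialForm.

Definition initial_forms_preimage (K : fieldType) (nu : K -> int) (p : K) (Rs : K -> Prop)
    n (rR : realType) (w : 'I_n -> rR) (I : {mpoly K[n]} -> Prop) (h : {mpoly K[n.+1]}) :=
  exists F, [/\ RtX_series Rs F, (exists2 gI, pi_rel nu p F gI & I gI) &
                is_initial_form w F h].

Section Lifting.
Variables (K : fieldType) (nu : K -> int) (p : K) (k : fieldType) (res : K -> k).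
Variable Rs : K -> Prop.
Hypothesis Hnu : is_dvaluation nu p.
Hypothesis Hres : is_residue_map nu res.
Hypothesis HRsub : is_subring Rs.
Hypothesis HROK : forall x, Rs x -> OK nu x.
Hypothesis HRdense : dense_in_OK nu Rs.
Variables (n : nat) (rR : realType) (w : 'I_n -> rR).

Definition digit_series (g : {mpoly K[n]}) a b := digit p HRsub HRdense g@_a b.

Lemma digit_series_RtX g : OK_mpoly nu g -> RtX_series Rs (digit_series g).
Proof.
move=> Og; split=> [a b|]; first exact: digit_Rs.
exists (msupp g) => a b; rewrite mcoeff_msupp; apply: contra_neq => ga0.
by rewrite /digit_series ga0 digit0.
Qed.

Lemma exists_pexpn_integral (f : {mpoly K[n]}) : exists j, OK_mpoly nu ((p ^+ j)%:MP * f).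
Proof.
exists (\sum_(a <- msupp f) `|nu f@_a|)%N => a; rewrite mcoeffCM.
have [->|fa0] := eqVneq f@_a 0; first by rewrite mulr0; exact: vclose0.
right; rewrite (nuM Hnu) ?expf_neq0 ?(p_neq0 Hnu) // (nu_pexpn Hnu).
suff : (`|nu f@_a| <= \sum_(a <- msupp f) `|nu f@_a|)%N by lia.
by rewrite (big_rem a) ?mcoeff_msupp //= leq_addr.
Qed.

Lemma in_nu_lift (I : {mpoly K[n]} -> Prop) f : is_ideal I -> I f ->
  exists2 h, initial_forms_preimage nu p Rs w I h & red_t1 res h = in_nu w nu p res f.
Proof.
move=> [_ _ IM] If; have [j Og] := exists_pexpn_integral f.
set g := _ * f in Og; set F := digit_series g.
have [RF [S FS]] := digit_series_RtX Og; have OF a b := HROK (RF a b).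
have Hpi : pi_rel nu p F g by move=> a; exact: (digits_converge Hnu).
have [h Hin] := initial_form_exists w FS.
exists h; first by exists F; split=> //; [exact: digit_series_RtX|exists g; last exact: IM].
rewrite -(in_nu_scale_pexpn res Hnu w f j) -/g.
have [g0|g0] := eqVneq g 0.
  have [//|->] := red_initial_form_cases Hnu Hres OF Hpi Hin.
  by rewrite g0 in_nu0.
have unitF a b : F a b != 0 -> res (F a b) != 0 by exact: res_digit_neq0.
have [a0 [b0 [m0 r0]]] := unit_series_maxterm Hnu Hres w OF Hpi unitF g0.
exact (red_initial_form Hnu Hres OF Hpi Hin m0 r0).
Qed.

Definition lift_mpoly (q : {mpoly k[n]}) : {mpoly K[n.+1]} :=
  \sum_(a <- msupp q) res_lift Hres HRsub HROK HRdense q@_a *: 'X_[mcons 0 a].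

Lemma lift_mpoly_RtX q : RtX_poly Rs (lift_mpoly q).
Proof.
move=> m; rewrite raddf_sum /=; apply: (big_ind Rs); [exact: Rs0|exact: RsD|move=> a _].
rewrite mcoeffZ mcoeffX; case: eqP => _; rewrite ?mulr1 ?mulr0; last exact: Rs0.
exact: (res_liftP Hres HRsub HROK HRdense _).1.
Qed.

Lemma red_lift_mpoly q : red_t1 res (lift_mpoly q) = q.
Proof.
have liftP z := res_liftP Hres HRsub HROK HRdense z.
rewrite /lift_mpoly (red_sum Hnu Hres) => [|a _]; last exact/OK_mpolyZX/HROK/(liftP _).1.
by rewrite [RHS]mpolyE; apply: eq_bigr => a _; rewrite (redZX Hres) mtail_mcons (liftP _).2.
Qed.

Lemma red_gen_ideal (G : {mpoly K[n.+1]} -> Prop) (H : {mpoly k[n]} -> Prop) h :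
  (forall g, G g -> OK_mpoly nu g) -> (forall g, G g -> H (red_t1 res g)) ->
  gen_ideal (RtX_poly Rs) G h -> gen_ideal (fun _ => True) H (red_t1 res h).
Proof.
move=> OG GH [s [Hs ->]].
have Os q : q \in s -> OK_mpoly nu q.1 /\ OK_mpoly nu q.2.
  by move=> /Hs[R1 /OG O2]; split=> // a; exact/HROK/R1.
exists [seq (red_t1 res q.1, red_t1 res q.2) | q <- s]; rewrite (red_sum_mul Hnu Hres) // big_map.
by split=> // _ /mapP[q /Hs[_ /GH Hq] ->].
Qed.

Lemma lift_sum_mul (G : {mpoly K[n.+1]} -> Prop) (H : {mpoly k[n]} -> Prop)
    (s : seq ({mpoly k[n]} * {mpoly k[n]})) :
  (forall y, H y -> exists2 g, G g & red_t1 res g = y) -> (forall q, q \in s -> H q.2) ->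
  exists s', (forall q, q \in s' -> RtX_poly Rs q.1 /\ G q.2) /\
    \sum_(q <- s) q.1 * q.2 = \sum_(q <- s') red_t1 res q.1 * red_t1 res q.2.
Proof.
move=> HG; elim: s => [|q s IHs] Hs; first by exists [::]; rewrite !big_nil.
have [|s' [Hs' sum_s]] := IHs; first by move=> q' q's; apply: Hs; rewrite inE q's orbT.
have /HG[g Gg rg] := Hs q (mem_head _ _).
exists ((lift_mpoly q.1, g) :: s'); split; last by rewrite !big_cons sum_s red_lift_mpoly rg.
by move=> q'; rewrite inE => /orP[/eqP-> | /Hs' //]; split; [exact: lift_mpoly_RtX|].
Qed.

Lemma red_gen_ideal_lift (G : {mpoly K[n.+1]} -> Prop) (H : {mpoly k[n]} -> Prop) x :
  (forall g, G g -> OK_mpoly nu g) -> (forall y, H y -> exists2 g, G g & red_t1 res g = y) ->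
  gen_ideal (fun _ => True) H x -> exists h, gen_ideal (RtX_poly Rs) G h /\ x = red_t1 res h.
Proof.
move=> OG HG [s [Hs ->]].
have [s' [Hs' ->]] := lift_sum_mul HG (fun q qs => (Hs q qs).2).
exists (\sum_(q <- s') q.1 * q.2); split; first by exists s'.
by rewrite (red_sum_mul Hnu Hres) // => q /Hs'[R1 /OG O2]; split=> // a; exact/HROK/R1.
Qed.

End Lifting.

Theorem corollary2p9
  (K : fieldType) (nu : K -> int) (p : K) (k : fieldType) (res : K -> k)
  (Rs : K -> Prop) (n : nat) (rR : realType)
  (Hnu : is_dvaluation nu p) (Hcomplete : vcomplete nu)
  (Hres : is_residue_map nu res)
  (HRsub : is_subring Rs) (HROK : forall x, Rs x -> OK nu x)
  (HRdense : dense_in_OK nu Rs) (HRnoeth : is_noetherian_sub Rs) (HRp : Rs p)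
  (I : {mpoly K[n]} -> Prop) (HI : is_ideal I) (w : 'I_n -> rR) :
  forall x : {mpoly k[n]},
    (exists h : {mpoly K[n.+1]},
        gen_ideal (RtX_poly Rs)
          (fun g => exists f, [/\ RtX_series Rs f,
                                 (exists2 gI, pi_rel nu p f gI & I gI) &
                                 is_initial_form w f g])
          h
        /\ x = red_t1 res h)
    <->
    gen_ideal (fun _ => True) (fun g => exists2 f, I f & g = in_nu w nu p res f) x.
Proof.
have OG h : initial_forms_preimage nu p Rs w I h -> OK_mpoly nu h.
  by case=> F [[RF _] _ Hin] a; apply/HROK/(initial_form_RtX Hin HRsub RF).
move=> x; split=> [[h [Hh ->]]|Hx].
  apply: (red_gen_ideal Hnu Hres HROK OG _ Hh) => g [F [[RF _] [gI Hpi IgI] Hin]].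
  have [I0 _ _] := HI; have OF a b := HROK _ (RF a b).
  have [->|->] := red_initial_form_cases Hnu Hres OF Hpi Hin; first by exists gI.
  by exists 0; rewrite ?in_nu0.
apply: (red_gen_ideal_lift Hnu Hres HRsub HROK HRdense OG _ Hx) => _ [f If ->].
exact: in_nu_lift.
Qed.
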